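(* The class of $\tau_{\mathcal{I}}$-Świątkowski functions coincides with the class of $\tau_\ast$-Świątkowski functions.
   Context: $\tau_\ast=\{U\setminus M: U\text{ Euclidean open},\ M\text{ meager}\}$. $\tau_{\mathcal{I}}$ is the $\mathcal{I}$-density topology: for a set $A\subset\mathbb{R}$ with the Baire property, $x$ is an $\mathcal{I}$-density point of $A$ if for every increasing sequence $(n_m)$ of natural numbers there is a subsequence $(n_{m_p})$ such that the characteristic functions of $n_{m_p}\cdot(A-x)\cap[-1,1]$ converge to $1$ on $[-1,1]$ outside a meager set; $\tau_{\mathcal{I}}$ consists of the sets $A$ with the Baire property every point of which is an $\mathcal{I}$-density point of $A$. For a topology $\sigma$ and $f\colon\mathbb{R}\to\mathbb{R}$, $\mathrm{C}_\sigma(f)$ is the set of points at which $f\colon(\mathbb{R},\sigma)\to\mathbb{R}$ (Euclidean) is continuous, and $f$ is a $\sigma$-Świątkowski function if for all $a,b$ with $f(a)<f(b)$ there exists $x\in\mathrm{C}_\sigma(f)$ strictly between $a$ and $b$ with $f(a)<f(x)<f(b)$. *)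

From Stdlib Require Import Reals Rtopology.
Open Scope R_scope.

Definition nowhere_dense (E : R -> Prop) : Prop :=
  forall x, ~ interior (adherence E) x.

Definition meager (M : R -> Prop) : Prop :=
  exists E : nat -> (R -> Prop),
    (forall n, nowhere_dense (E n)) /\
    (forall x, M x -> exists n, E n x).

Definition baire_property (A : R -> Prop) : Prop :=
  exists U M, open_set U /\ meager M /\
    forall x, A x <-> ((U x /\ ~ M x) \/ (~ U x /\ M x)).

Definition tau_star (A : R -> Prop) : Prop :=
  exists U M, open_set U /\ meager M /\
    forall x, A x <-> (U x /\ ~ M x).

Definition in_scaled (A : R -> Prop) (x : R) (n : nat) (t : R) : Prop :=
  exists a, A a /\ t = INR n * (a - x).

Definition strictly_increasing (s : nat -> nat) : Prop :=
  forall i j, (i < j)%nat -> (s i < s j)%nat.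

(* x is an I-density point of A: for every increasing sequence (n_m) there is
   a subsequence (n_{m_p}) such that the characteristic functions of
   n_{m_p}(A - x) ∩ [-1,1] converge to 1 on [-1,1] outside a meager set
   (a {0,1}-valued sequence converges to 1 iff it is eventually 1). *)
Definition I_density_point (A : R -> Prop) (x : R) : Prop :=
  forall n : nat -> nat, strictly_increasing n ->
    exists m : nat -> nat, strictly_increasing m /\
      exists M, meager M /\
        forall t, -1 <= t <= 1 -> ~ M t ->
          exists N, forall p, (N <= p)%nat -> in_scaled A x (n (m p)) t.

Definition tau_I (A : R -> Prop) : Prop :=
  baire_property A /\ forall x, A x -> I_density_point A x.

Definition sigma_continuous_at (sigma : (R -> Prop) -> Prop) (f : R -> R) (x : R) : Prop :=
  forall eps, 0 < eps ->
    exists V, sigma V /\ V x /\ forall y, V y -> Rabs (f y - f x) < eps.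

Definition swiatkowski (sigma : (R -> Prop) -> Prop) (f : R -> R) : Prop :=
  forall a b, f a < f b ->
    exists x, sigma_continuous_at sigma f x /\
      Rmin a b < x < Rmax a b /\ f a < f x < f b.

From Stdlib Require Import Reals Rtopology Lra Lia Classical ClassicalEpsilon List Cantor.
Open Scope R_scope.

(* Every tau_star-open set is tau_I-open, so tau_star-continuity implies
   tau_I-continuity.  Conversely, an I-density point of V cannot be approached
   only through the meager part of a Baire representation V = U Δ M, so a
   tau_I-open set contains, near each of its points, an interval minus a meager
   set.  Hence a tau_I-Świątkowski function is, on a subinterval of every
   interval, eps-close to a constant off a meager set.  Nesting such intervals
   with eps halved at each step, and avoiding a growing finite part of the
   meager sets met so far, yields a point y in all of them and outside all the
   meager sets; the tau_star-open sets (c_k, d_k) \ M_k then witness continuity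
   at y.  Starting inside the interval where f stays between f a and f b around
   a tau_I-continuity point puts f y there as well. *)

Definition avoidable (E : R -> Prop) : Prop :=
  forall c d, c < d -> exists c' d', c < c' /\ c' < d' /\ d' < d /\
    forall z, c' <= z <= d' -> ~ E z.

Lemma nowhere_dense_avoidable (E : R -> Prop) : nowhere_dense E <-> avoidable E.
Proof.
  split.
  - intros HE c d Hcd.
    assert (Hr : 0 < (d - c) / 2) by lra.
    assert (exists y, Rabs (y - (c + d) / 2) < (d - c) / 2 /\ ~ adherence E y)
      as [y [Hy HEy]].
    { apply NNPP; intros Hno. apply (HE ((c + d) / 2)).
      exists (mkposreal _ Hr). intros y Hy. apply NNPP; intros HEy. apply Hno; eauto. }
    assert (exists del : posreal, forall z, Rabs (z - y) < del -> ~ E z) as [del Hdel].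
    { apply NNPP; intros Hno. apply HEy. intros V [del HV]. apply NNPP; intros HVE.
      apply Hno. exists del. intros z Hz Ez. apply HVE.
      exists z. split; [apply HV, Hz | exact Ez]. }
    apply Rabs_def2 in Hy. pose proof (cond_pos del).
    set (r := Rmin del (Rmin (y - c) (d - y)) / 2).
    assert (Hr0 : 0 < r).
    { unfold r. assert (0 < Rmin del (Rmin (y - c) (d - y))); [|lra].
      repeat apply Rmin_glb_lt; lra. }
    pose proof (Rmin_l del (Rmin (y - c) (d - y))).
    pose proof (Rmin_r del (Rmin (y - c) (d - y))).
    pose proof (Rmin_l (y - c) (d - y)). pose proof (Rmin_r (y - c) (d - y)).
    exists (y - r), (y + r). unfold r in *. repeat split; try lra.
    intros z Hz. apply Hdel, Rabs_def1; lra.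
  - intros HE x [del Hdel]. pose proof (cond_pos del).
    destruct (HE (x - del) (x + del)) as [c' [d' [H1 [H2 [H3 H4]]]]]; [lra|].
    assert (Hp : 0 < (d' - c') / 2) by lra.
    destruct (Hdel ((c' + d') / 2) ltac:(apply Rabs_def1; lra)
                (fun w => c' < w < d')) as [y [Hy Ey]].
    { exists (mkposreal _ Hp). intros w Hw. apply Rabs_def2 in Hw. simpl in Hw. lra. }
    apply (H4 y); [lra | exact Ey].
Qed.

Lemma avoidable_empty : avoidable (fun _ => False).
Proof.
  intros c d Hcd. exists (c + (d - c) / 3), (d - (d - c) / 3).
  repeat split; try lra. intros z _ [].
Qed.

Lemma avoidable_union (A B : R -> Prop) :
  avoidable A -> avoidable B -> avoidable (fun z => A z \/ B z).
Proof.
  intros HA HB c d Hcd.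
  destruct (HA c d Hcd) as [c1 [d1 [H1 [H2 [H3 H4]]]]].
  destruct (HB c1 d1 H2) as [c2 [d2 [H5 [H6 [H7 H8]]]]].
  exists c2, d2. repeat split; try lra.
  intros z Hz [Az|Bz]; [apply (H4 z) | apply (H8 z)]; auto; lra.
Qed.

Lemma avoidable_finite_union (l : list (R -> Prop)) :
  (forall A, In A l -> avoidable A) -> avoidable (fun z => exists A, In A l /\ A z).
Proof.
  induction l as [|A l IH]; intros Hl c d Hcd.
  - destruct (avoidable_empty c d Hcd) as [c' [d' [H1 [H2 [H3 _]]]]].
    exists c', d'. repeat split; auto. intros z _ [B [[] _]].
  - destruct (avoidable_union A (fun z => exists B, In B l /\ B z)
                (Hl A (or_introl eq_refl)) (IH (fun B HB => Hl B (or_intror HB))) c d Hcd)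
      as [c' [d' [H1 [H2 [H3 H4]]]]].
    exists c', d'. repeat split; auto.
    intros z Hz [B [[<- | HB] Bz]]; apply (H4 z Hz); [left | right; exists B]; auto.
Qed.

Lemma avoidable_in_scaled (E : R -> Prop) (x : R) (n : nat) :
  avoidable E -> (0 < n)%nat -> avoidable (in_scaled E x n).
Proof.
  intros HE Hn c d Hcd. apply lt_0_INR in Hn.
  destruct (HE (x + c / INR n) (x + d / INR n)) as [c1 [d1 [H1 [H2 [H3 H4]]]]].
  { apply Rplus_lt_compat_l, Rmult_lt_compat_r; [apply Rinv_0_lt_compat|]; lra. }
  assert (Hc : c < INR n * (c1 - x)).
  { apply (Rmult_lt_reg_r (/ INR n)); [apply Rinv_0_lt_compat; lra|].
    replace (INR n * (c1 - x) * / INR n) with (c1 - x) by (field; lra). unfold Rdiv in H1. lra. }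
  assert (Hd : INR n * (d1 - x) < d).
  { apply (Rmult_lt_reg_r (/ INR n)); [apply Rinv_0_lt_compat; lra|].
    replace (INR n * (d1 - x) * / INR n) with (d1 - x) by (field; lra). unfold Rdiv in H3. lra. }
  exists (INR n * (c1 - x)), (INR n * (d1 - x)). repeat split; try lra.
  { apply Rmult_lt_compat_l; lra. }
  intros z [Hz1 Hz2] [a [Ea ->]]. apply (H4 a); [|exact Ea].
  apply Rmult_le_reg_l in Hz1, Hz2; lra.
Qed.

Lemma nowhere_dense_empty : nowhere_dense (fun _ => False).
Proof. apply nowhere_dense_avoidable, avoidable_empty. Qed.

Lemma meager_subset (A B : R -> Prop) :
  (forall z, A z -> B z) -> meager B -> meager A.
Proof. intros HAB [E [HE HBE]]. exists E. split; auto. Qed.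

Lemma meager_in_scaled (M : R -> Prop) (x : R) (n : nat) :
  meager M -> (0 < n)%nat -> meager (in_scaled M x n).
Proof.
  intros [E [HE HME]] Hn. exists (fun i => in_scaled (E i) x n). split.
  - intros i. apply nowhere_dense_avoidable, avoidable_in_scaled; auto.
    apply nowhere_dense_avoidable, HE.
  - intros t [a [Ma ->]]. destruct (HME a Ma) as [i Ei]. exists i, a. auto.
Qed.

Definition nd_cover (M : R -> Prop) : nat -> R -> Prop :=
  epsilon (inhabits (fun (_ : nat) (_ : R) => False))
    (fun E => (forall n, nowhere_dense (E n)) /\ (meager M -> forall x, M x -> exists n, E n x)).

Lemma nd_cover_spec (M : R -> Prop) :
  (forall n, nowhere_dense (nd_cover M n)) /\
  (meager M -> forall x, M x -> exists n, nd_cover M n x).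
Proof.
  unfold nd_cover. apply epsilon_spec. destruct (classic (meager M)) as [[E HE] | HM].
  - exists E. tauto.
  - exists (fun _ _ => False). split; [intros; apply nowhere_dense_empty | tauto].
Qed.

Lemma meager_countable_union (M : nat -> R -> Prop) :
  (forall j, meager (M j)) -> meager (fun z => exists j, M j z).
Proof.
  intros HM. exists (fun k => let (j, i) := of_nat k in nd_cover (M j) i). split.
  - intros k. destruct (of_nat k) as [j i]. apply nd_cover_spec.
  - intros z [j Mz]. destruct (proj2 (nd_cover_spec (M j)) (HM j) z Mz) as [i Hi].
    exists (to_nat (j, i)). rewrite cancel_of_to. exact Hi.
Qed.

Lemma meager_union (A B : R -> Prop) :
  meager A -> meager B -> meager (fun z => A z \/ B z).
Proof.
  intros HA HB.
  apply meager_subset with (fun z => exists j, match j with O => A z | S _ => B z end).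
  - intros z [Az | Bz]; [exists O | exists 1%nat]; auto.
  - apply meager_countable_union. intros [|j]; auto.
Qed.

Lemma nested_intervals (a b : nat -> R) :
  Un_growing a -> Un_decreasing b -> (forall k, a k <= b k) ->
  exists y, forall k, a k <= y <= b k.
Proof.
  intros Ha Hb Hab.
  assert (Hcross : forall j k, a j <= b k).
  { intros j k. destruct (Nat.le_ge_cases j k) as [Hjk | Hkj].
    - pose proof (tech9 a Ha j k Hjk). pose proof (Hab k). lra.
    - pose proof (decreasing_prop b k j Hb Hkj). pose proof (Hab j). lra. }
  destruct (completeness (fun r => exists k, r = a k)) as [y [Hub Hlub]].
  - exists (b O). intros r [k ->]. apply Hcross.
  - exists (a O), O. reflexivity.
  - exists y. intros k. split.
    + apply Hub. exists k. reflexivity.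
    + apply Hlub. intros r [j ->]. apply Hcross.
Qed.

Section NestedRefinement.

Variables (St : Type) (c d : St -> R) (M : St -> R -> Prop)
  (G : St -> Prop) (Rel : St -> St -> Prop).

Hypothesis G_lt : forall s, G s -> c s < d s.
Hypothesis G_meager : forall s, G s -> meager (M s).
Hypothesis G_refine : forall s, G s -> forall c' d', c s < c' -> c' < d' -> d' < d s ->
  exists s', G s' /\ Rel s s' /\ c' < c s' /\ d s' < d'.

(* A stage is the current state together with the list of earlier ones.  The
   next state avoids the first [length] pieces of the covers of all meager sets
   seen so far, so that every piece of every cover is eventually avoided. *)
Definition refines (p q : St * list St) : Prop :=
  snd q = fst p :: snd p /\ G (fst q) /\ Rel (fst p) (fst q) /\
  c (fst p) < c (fst q) /\ d (fst q) < d (fst p) /\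
  forall z, c (fst q) <= z <= d (fst q) -> forall t i, In t (fst p :: snd p) ->
    (i <= length (snd p))%nat -> ~ nd_cover (M t) i z.

Lemma refines_exists (p : St * list St) : G (fst p) -> exists q, refines p q.
Proof.
  destruct p as [s h]; simpl; intros Gs.
  set (l := flat_map (fun t => map (nd_cover (M t)) (seq 0 (S (length h)))) (s :: h)).
  destruct (avoidable_finite_union l) with (c s) (d s) as [c' [d' [H1 [H2 [H3 Hl]]]]].
  - intros A HA. apply in_flat_map in HA as [t [_ HA]]. apply in_map_iff in HA as [i [<- _]].
    apply nowhere_dense_avoidable, nd_cover_spec.
  - apply G_lt, Gs.
  - destruct (G_refine s Gs c' d' H1 H2 H3) as [s' [Gs' [Rss' [H4 H5]]]].
    exists (s', s :: h). unfold refines; simpl. repeat split; auto; try lra.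
    intros z Hz t i Ht Hi Hz'. apply (Hl z); [lra|].
    exists (nd_cover (M t) i). split; [|exact Hz'].
    apply in_flat_map. exists t. split; [exact Ht|]. apply in_map, in_seq. lia.
Qed.

Variable s0 : St.
Hypothesis G_s0 : G s0.

Let next (p : St * list St) : St * list St := epsilon (inhabits p) (refines p).
Let run (k : nat) : St * list St := Nat.iter k next (s0, nil).

Lemma run_refines (k : nat) : G (fst (run k)) /\ refines (run k) (run (S k)).
Proof.
  induction k as [|k [_ IH]].
  - split; [exact G_s0|].
    apply (epsilon_spec (inhabits _) (refines (run 0))), refines_exists, G_s0.
  - assert (Gk : G (fst (run (S k)))) by apply IH.
    split; [exact Gk|].
    apply (epsilon_spec (inhabits _) (refines (run (S k)))), refines_exists, Gk.
Qed.

Lemma run_length (k : nat) : length (snd (run k)) = k.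
Proof.
  induction k as [|k IH]; [reflexivity|].
  destruct (run_refines k) as [_ [-> _]]. simpl. congruence.
Qed.

Lemma run_history (j k : nat) : (j <= k)%nat -> In (fst (run j)) (fst (run k) :: snd (run k)).
Proof.
  induction 1 as [|k _ IH]; [now left|].
  destruct (run_refines k) as [_ [-> _]]. now right.
Qed.

Lemma nested_refinement : exists (sq : nat -> St) y, sq O = s0 /\
  (forall k, G (sq k) /\ Rel (sq k) (sq (S k))) /\
  (forall k, c (sq k) < y < d (sq k)) /\ (forall k, ~ M (sq k) y).
Proof.
  destruct (nested_intervals (fun k => c (fst (run k))) (fun k => d (fst (run k))))
    as [y Hy].
  { intros k. destruct (run_refines k) as [_ [_ [_ [_ [Hc _]]]]]. lra. }
  { intros k. destruct (run_refines k) as [_ [_ [_ [_ [_ [Hd _]]]]]]. lra. }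
  { intros k. left. apply G_lt, run_refines. }
  exists (fun k => fst (run k)), y. split; [reflexivity|]. split; [|split].
  - intros k. destruct (run_refines k) as [Gk [_ [_ [Rk _]]]]. auto.
  - intros k. destruct (run_refines k) as [_ [_ [_ [_ [Hc [Hd _]]]]]].
    pose proof (Hy (S k)). lra.
  - intros j Mj.
    destruct (proj2 (nd_cover_spec (M (fst (run j)))) (G_meager _ (proj1 (run_refines j))) y Mj)
      as [i Hi].
    destruct (run_refines (Nat.max j i)) as [_ [_ [_ [_ [_ [_ Havoid]]]]]].
    apply (Havoid y (Hy (S (Nat.max j i))) (fst (run j)) i); [|rewrite run_length; lia|exact Hi].
    apply run_history. lia.
Qed.

End NestedRefinement.

Lemma meager_misses_interval (M : R -> Prop) (c d : R) :
  meager M -> c < d -> exists y, c < y < d /\ ~ M y.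
Proof.
  intros HM Hcd.
  destruct (nested_refinement (R * R) fst snd (fun _ => M) (fun s => fst s < snd s)
              (fun _ _ => True)) with (s0 := (c, d)) as [sq [y [H0 [_ [Hy HMy]]]]]; auto.
  - intros s _ c' d' _ Hcd' _. exists (c' + (d' - c') / 3, d' - (d' - c') / 3).
    simpl. repeat split; lra.
  - exists y. split; [|apply (HMy O)]. specialize (Hy O). rewrite H0 in Hy. exact Hy.
Qed.

Lemma strictly_increasing_ge (m : nat -> nat) : strictly_increasing m -> forall p, (p <= m p)%nat.
Proof.
  intros Hm p. induction p as [|p IH]; [lia|]. specialize (Hm p (S p) (Nat.lt_succ_diag_r p)). lia.
Qed.

Lemma scaled_close (x a t r : R) (n : nat) :
  -1 <= t <= 1 -> 0 < r -> / r < INR n -> t = INR n * (a - x) -> Rabs (a - x) < r.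
Proof.
  intros Ht Hr Hn ->.
  assert (Hnr : 1 < INR n * r).
  { apply (Rmult_lt_compat_r r) in Hn; [|exact Hr]. rewrite Rinv_l in Hn; lra. }
  assert (Hn0 : 0 < INR n) by (pose proof (Rinv_0_lt_compat r Hr); lra).
  assert (Habs : INR n * Rabs (a - x) <= 1).
  { rewrite <- (Rabs_pos_eq (INR n)), <- Rabs_mult by lra. apply Rabs_le. lra. }
  apply Rnot_le_lt. intros Hge. apply (Rmult_le_compat_l (INR n)) in Hge; lra.
Qed.

(* Along the scales of the subsequence, [A] has a point [a] with [t = n (a - x)]
   for a [t] in [[-1, 1]] chosen off the (meager) rescalings of [M]; such an [a]
   lies outside [M] and close to [x]. *)
Lemma I_density_point_avoids_meager (A M : R -> Prop) (x del : R) :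
  I_density_point A x -> meager M -> 0 < del ->
  exists a, A a /\ ~ M a /\ Rabs (a - x) < del.
Proof.
  intros Hdens HM Hdel.
  destruct (Hdens (fun k => k) (fun i j H => H)) as [m [Hm [N0 [HN0 Hcov]]]].
  destruct (INR_unbounded (/ del)) as [P HP].
  assert (HmP : forall p, (P <= p)%nat -> / del < INR (m p)).
  { intros p Hp. pose proof (le_INR _ _ (Nat.le_trans _ _ _ Hp (strictly_increasing_ge m Hm p))).
    lra. }
  assert (HP0 : (0 < P)%nat).
  { destruct P; [|lia]. pose proof (Rinv_0_lt_compat del Hdel). simpl in HP. lra. }
  destruct (meager_misses_interval
              (fun t => N0 t \/ exists p, in_scaled M x (m (p + P)%nat) t) (-1) 1)
    as [t [Ht HBt]]; [| lra |].
  { apply meager_union; [exact HN0|]. apply meager_countable_union. intros p.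
    apply meager_in_scaled; [exact HM|]. pose proof (strictly_increasing_ge m Hm (p + P)). lia. }
  destruct (Hcov t ltac:(lra) (fun H => HBt (or_introl H))) as [N HN].
  destruct (HN (N + P)%nat ltac:(lia)) as [a [Aa Hta]].
  exists a. split; [exact Aa|]. split.
  - intros Ma. apply HBt. right. exists N, a. auto.
  - apply (scaled_close x a t del (m (N + P)%nat)); auto; [lra|]. apply HmP. lia.
Qed.

Lemma tau_I_residual_interval (V : R -> Prop) (x del : R) :
  tau_I V -> V x -> 0 < del ->
  exists c d M, x - del < c /\ c < d /\ d < x + del /\ meager M /\
    forall z, c < z < d -> ~ M z -> V z.
Proof.
  intros [[U [M [HU [HM HV]]]] Hdens] Vx Hdel.
  destruct (I_density_point_avoids_meager V M x del (Hdens x Vx) HM Hdel) as [a [Va [Ma Ha]]].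
  assert (Ua : U a) by (apply HV in Va; tauto).
  destruct (HU a Ua) as [r Hr]. pose proof (cond_pos r).
  pose proof (Rle_abs (a - x)).
  assert (- (a - x) <= Rabs (a - x)) by (rewrite <- Rabs_Ropp; apply Rle_abs).
  set (rho := Rmin r (del - Rabs (a - x)) / 2).
  assert (Hrho : 0 < rho)
    by (unfold rho; assert (0 < Rmin r (del - Rabs (a - x))) by (apply Rmin_glb_lt; lra); lra).
  assert (rho <= r / 2) by (unfold rho; pose proof (Rmin_l r (del - Rabs (a - x))); lra).
  assert (rho <= (del - Rabs (a - x)) / 2)
    by (unfold rho; pose proof (Rmin_r r (del - Rabs (a - x))); lra).
  exists (a - rho), (a + rho), M. repeat split; try lra; [exact HM|].
  intros z Hz Mz. apply HV. left. split; [|exact Mz].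
  apply Hr. apply Rabs_def1; lra.
Qed.

Definition close_off (f : R -> R) (c d : R) (M : R -> Prop) (v eps : R) : Prop :=
  forall z, c < z < d -> ~ M z -> Rabs (f z - v) < eps.

Lemma tau_I_continuity_residual (f : R -> R) (x eps del : R) :
  sigma_continuous_at tau_I f x -> 0 < eps -> 0 < del ->
  exists c d M, x - del < c /\ c < d /\ d < x + del /\ meager M /\ close_off f c d M (f x) eps.
Proof.
  intros Hcont Heps Hdel. destruct (Hcont eps Heps) as [V [HV [Vx HfV]]].
  destruct (tau_I_residual_interval V x del HV Vx Hdel) as [c [d [M [H1 [H2 [H3 [HM HVcd]]]]]]].
  exists c, d, M. repeat split; auto. intros z Hz Mz. apply HfV, HVcd; auto.
Qed.

Definition locally_residually_constant (f : R -> R) : Prop :=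
  forall c' d' eps, c' < d' -> 0 < eps ->
    exists c d v M, c' < c /\ c < d /\ d < d' /\ meager M /\ close_off f c d M v eps.

Lemma swiatkowski_tau_I_locally_residually_constant (f : R -> R) :
  swiatkowski tau_I f -> locally_residually_constant f.
Proof.
  intros Hsw c' d' eps Hcd Heps.
  destruct (classic (exists p q, c' < p < d' /\ c' < q < d' /\ f p < f q))
    as [[p [q [Hp [Hq Hpq]]]] | Hconst].
  - destruct (Hsw p q Hpq) as [x [Hcx [Hx _]]].
    assert (Hx' : c' < x < d').
    { pose proof (Rmin_glb_lt p q c'). pose proof (Rmax_lub_lt p q d'). lra. }
    destruct (tau_I_continuity_residual f x eps (Rmin (x - c') (d' - x)) Hcx Heps)
      as [c [d [M [H1 [H2 [H3 [HM Hclose]]]]]]].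
    { apply Rmin_glb_lt; lra. }
    pose proof (Rmin_l (x - c') (d' - x)). pose proof (Rmin_r (x - c') (d' - x)).
    exists c, d, (f x), M. repeat split; auto; lra.
  - exists (c' + (d' - c') / 3), (d' - (d' - c') / 3), (f ((c' + d') / 2)), (fun _ => False).
    repeat split; try lra.
    + exists (fun _ _ => False). split; [intros; apply nowhere_dense_empty | tauto].
    + intros z Hz _. replace (f z) with (f ((c' + d') / 2)); [rewrite Rminus_diag, Rabs_R0; lra|].
      destruct (Rtotal_order (f z) (f ((c' + d') / 2))) as [H | [H | H]]; auto;
        exfalso; apply Hconst.
      * exists z, ((c' + d') / 2). repeat split; lra.
      * exists ((c' + d') / 2), z. repeat split; lra.
Qed.

Lemma open_interval (c d : R) : open_set (fun z => c < z < d).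
Proof.
  intros x Hx. assert (Hr : 0 < Rmin (x - c) (d - x)) by (apply Rmin_glb_lt; lra).
  exists (mkposreal _ Hr). intros y Hy. apply Rabs_def2 in Hy. simpl in Hy.
  pose proof (Rmin_l (x - c) (d - x)). pose proof (Rmin_r (x - c) (d - x)). lra.
Qed.

Lemma tau_star_interval_off_meager (c d : R) (M : R -> Prop) :
  meager M -> tau_star (fun z => c < z < d /\ ~ M z).
Proof. intros HM. exists (fun z => c < z < d), M. split; [apply open_interval|tauto]. Qed.

Record stage := Stage { st_c : R; st_d : R; st_eps : R; st_v : R; st_M : R -> Prop }.

Lemma locally_residually_constant_tau_star_continuity (f : R -> R) (c d : R) (M : R -> Prop) :
  locally_residually_constant f -> c < d -> meager M ->
  exists y, c < y < d /\ ~ M y /\ sigma_continuous_at tau_star f y.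
Proof.
  intros Hf Hcd HM.
  set (G := fun s => st_c s < st_d s /\ 0 < st_eps s /\ meager (st_M s) /\
              close_off f (st_c s) (st_d s) (st_M s) (st_v s) (st_eps s)).
  destruct (Hf c d 1 Hcd Rlt_0_1) as [c1 [d1 [v1 [M1 [H1 [H2 [H3 [HM1 Hclose1]]]]]]]].
  destruct (nested_refinement stage st_c st_d st_M G
              (fun s s' => st_eps s' = st_eps s / 2))
    with (s0 := Stage c1 d1 1 v1 (fun z => M z \/ M1 z)) as [sq [y [H0 [Hsq [Hy HMy]]]]].
  - intros s Gs. apply Gs.
  - intros s Gs. apply Gs.
  - intros s [_ [Heps _]] c' d' H4 H5 H6.
    destruct (Hf c' d' (st_eps s / 2) H5 ltac:(lra))
      as [c2 [d2 [v2 [M2 [H7 [H8 [H9 [HM2 Hclose2]]]]]]]].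
    exists (Stage c2 d2 (st_eps s / 2) v2 M2). unfold G; simpl. repeat split; auto; lra.
  - unfold G; simpl. repeat split; auto; [lra | apply meager_union; auto |].
    intros z Hz HMz. apply Hclose1; tauto.
  - assert (Heps : forall k, st_eps (sq k) = (/ 2) ^ k).
    { induction k as [|k IH]; [rewrite H0; reflexivity|].
      rewrite (proj2 (Hsq k)), IH. simpl. field. }
    exists y. split; [|split].
    + specialize (Hy O). rewrite H0 in Hy. simpl in Hy. lra.
    + specialize (HMy O). rewrite H0 in HMy. simpl in HMy. tauto.
    + intros eps Hpos.
      destruct (pow_lt_1_zero (/ 2) ltac:(rewrite Rabs_pos_eq; lra) (eps / 2) ltac:(lra))
        as [N HN].
      specialize (HN N (Nat.le_refl N)). rewrite Rabs_pos_eq in HN by (apply pow_le; lra).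
      destruct (Hsq N) as [[_ [_ [HMN HcloseN]]] _]. rewrite Heps in HcloseN.
      exists (fun z => st_c (sq N) < z < st_d (sq N) /\ ~ st_M (sq N) z).
      split; [apply tau_star_interval_off_meager, HMN|]. split; [split; auto|].
      intros z [Hz HMz].
      pose proof (HcloseN z Hz HMz) as Hfz. pose proof (HcloseN y (Hy N) (HMy N)) as Hfy.
      apply Rabs_def2 in Hfz, Hfy. apply Rabs_def1; lra.
Qed.

Lemma swiatkowski_tau_I_tau_star (f : R -> R) : swiatkowski tau_I f -> swiatkowski tau_star f.
Proof.
  intros Hsw a b Hab.
  destruct (Hsw a b Hab) as [x [Hcx [Hx Hfx]]].
  set (eps := Rmin (f x - f a) (f b - f x)).
  set (del := Rmin (x - Rmin a b) (Rmax a b - x)).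
  assert (Heps : 0 < eps) by (apply Rmin_glb_lt; lra).
  assert (Hdel : 0 < del) by (apply Rmin_glb_lt; lra).
  destruct (tau_I_continuity_residual f x eps del Hcx Heps Hdel)
    as [c [d [M [H1 [H2 [H3 [HM Hclose]]]]]]].
  destruct (locally_residually_constant_tau_star_continuity f c d M
              (swiatkowski_tau_I_locally_residually_constant f Hsw) H2 HM)
    as [y [Hy [HMy Hcy]]].
  exists y. split; [exact Hcy|].
  pose proof (Rabs_def2 _ _ (Hclose y Hy HMy)).
  pose proof (Rmin_l (f x - f a) (f b - f x)). pose proof (Rmin_r (f x - f a) (f b - f x)).
  pose proof (Rmin_l (x - Rmin a b) (Rmax a b - x)).
  pose proof (Rmin_r (x - Rmin a b) (Rmax a b - x)).
  unfold eps, del in *. split; lra.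
Qed.

Lemma tau_star_tau_I (V : R -> Prop) : tau_star V -> tau_I V.
Proof.
  intros [U [M [HU [HM HV]]]]. split.
  - exists U, (fun z => U z /\ M z). split; [exact HU|]. split.
    + apply meager_subset with M; [tauto | exact HM].
    + intros z. rewrite HV. tauto.
  - intros x Vx n Hn. apply HV in Vx as [Ux Mx].
    destruct (HU x Ux) as [r Hr]. pose proof (cond_pos r) as Hr0.
    exists (fun k => k). split; [intros i j H; exact H|].
    exists (fun t => exists p, in_scaled M x (n (S p)) t). split.
    + apply meager_countable_union. intros p. apply meager_in_scaled; [exact HM|].
      specialize (Hn O (S p) ltac:(lia)). lia.
    + intros t Ht Bt. destruct (INR_unbounded (/ r)) as [N HN].
      exists (S N). intros [|p] Hp; [lia|].
      assert (Hnp : / r < INR (n (S p))).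
      { pose proof (le_INR _ _ (Nat.le_trans _ _ _ Hp (strictly_increasing_ge n Hn (S p))))
          as Hle.
        rewrite S_INR in Hle. lra. }
      assert (Hnp0 : 0 < INR (n (S p))) by (pose proof (Rinv_0_lt_compat r Hr0); lra).
      assert (Hta : t = INR (n (S p)) * (x + t / INR (n (S p)) - x)) by (field; lra).
      exists (x + t / INR (n (S p))). split; [|exact Hta]. apply HV. split.
      * apply Hr. exact (scaled_close x _ t r (n (S p)) Ht Hr0 Hnp Hta).
      * intros Ma. apply Bt. exists p, (x + t / INR (n (S p))). auto.
Qed.

Lemma swiatkowski_mono (sigma tau : (R -> Prop) -> Prop) (f : R -> R) :
  (forall V, sigma V -> tau V) -> swiatkowski sigma f -> swiatkowski tau f.
Proof.
  intros Hst Hsw a b Hab. destruct (Hsw a b Hab) as [x [Hcx Hx]].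
  exists x. split; [|exact Hx].
  intros eps Heps. destruct (Hcx eps Heps) as [V [HV HVx]]. exists V. auto.
Qed.

Theorem mainTheorem16 : forall f : R -> R,
  swiatkowski tau_I f <-> swiatkowski tau_star f.
Proof.
  intros f. split.
  - apply swiatkowski_tau_I_tau_star.
  - apply swiatkowski_mono, tau_star_tau_I.
Qed.
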